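(* Let $n,m,k$ be positive integers with $k\mid n$, let $p\in(0,1/2)$, and let $\mu_1,\dots,\mu_k\in\{0,1\}^m$ be fixed. Let $V=V_1\sqcup\dots\sqcup V_k$ with $|V_i|=n/k$, where every person $v\in V_i$ answers question $s\in\{1,\dots,m\}$ with $v(s)=\mu_i(s)$ with probability $1-p$ and $v(s)=1-\mu_i(s)$ with probability $p$, independently across persons and questions. Let $\mathcal P$ be the set of cuts $\{A_s^0,A_s^1\}$, $s=1,\dots,m$, with $A_s^y=\{v\in V: v(s)=y\}$. Let $a\in\mathbb N$ be the agreement parameter and $\alpha=a/n$. If $p<(n-ka)/(3n)$, then the probability that some mindset $\mu_i$ does not induce a $\mathcal P$-tangle is at most $$k\,m\,\exp\Bigl(-\frac{2n}{9k}(1-k\alpha-3p)^2\Bigr).$$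
   Context: An orientation of $\mathcal P$ chooses one side of every cut; it is identified with $\tau\in\{0,1\}^m$ by choosing the side $A_s^{\tau(s)}$ for question $s$. An orientation $O$ is a $\mathcal P$-tangle if for all (not necessarily distinct) chosen sides $A,B,C\in O$ we have $|A\cap B\cap C|\ge a$. The mindset $\mu_i$ induces a tangle if the orientation corresponding to $\mu_i$ is a $\mathcal P$-tangle. The probability is over the random answers. *)

From HB Require Import structures.
From mathcomp Require Import all_boot all_order all_algebra.
From mathcomp Require Import reals.
From mathcomp.analysis Require Import sequences exp.
Set Implicit Arguments. Unset Strict Implicit. Unset Printing Implicit Defensive.
Import Order.TTheory GRing.Theory Num.Theory.
Local Open Scope ring_scope.

(* Persons are 'I_n, questions are 'I_m, groups are 'I_k.
   An answer profile assigns to each person v and question s the answer v(s). *)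
Definition profile (n m : nat) := {ffun 'I_n -> {ffun 'I_m -> bool}}.

Definition prof_prob (R : realType) (n m k : nat) (grp : 'I_n -> 'I_k)
  (mu : 'I_k -> {ffun 'I_m -> bool}) (p : R) (w : profile n m) : R :=
  \prod_(v : 'I_n) \prod_(s : 'I_m)
     (if w v s == mu (grp v) s then 1 - p else p).

Definition side (n m : nat) (w : profile n m) (s : 'I_m) (y : bool) : {set 'I_n} :=
  [set v | w v s == y].

Definition is_tangle (n m : nat) (w : profile n m) (a : nat) (tau : 'I_m -> bool) : bool :=
  [forall s1 : 'I_m, forall s2 : 'I_m, forall s3 : 'I_m,
     a <= #|side w s1 (tau s1) :&: side w s2 (tau s2) :&: side w s3 (tau s3)|]%N.

Definition prob_some_fails (R : realType) (n m k : nat) (grp : 'I_n -> 'I_k)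
  (mu : 'I_k -> {ffun 'I_m -> bool}) (p : R) (a : nat) : R :=
  \sum_(w : profile n m | [exists i : 'I_k, ~~ is_tangle w a (mu i)])
     prof_prob grp mu p w.

(** Let [X_(i,s)] be the number of persons of [V_i] whose answer to question [s]
    deviates from [mu_i s].  The three sides chosen by [mu_i] for questions
    [s1, s2, s3] share every person of [V_i] who deviates on none of them, so
    [mu_i] induces a tangle as soon as [a + 3 X_(i,s) <= n/k] for every [s].
    Each [X_(i,s)] is binomial with [n/k] trials and success probability [p];
    its generating function factorises over the independent answers, and
    Hoeffding's lemma for a single Bernoulli trial turns the Chernoff bound into
    [P(X_(i,s) > p n/k + d) <= exp (-2 d^2 k / n)].  With
    [d = n/(3k) (1 - k alpha - 3 p)] a union bound over the [k m] pairs [(i,s)]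
    gives the claim. *)
From mathcomp Require Import classical_sets topology normedtype derive.
From mathcomp Require Import all_boot all_order all_algebra.
From mathcomp Require Import reals.
From mathcomp.analysis Require Import sequences exp.
From mathcomp Require Import ring lra zify.
Set Implicit Arguments. Unset Strict Implicit. Unset Printing Implicit Defensive.
Import Order.TTheory GRing.Theory Num.Theory.
Import numFieldNormedType.Exports.
Local Open Scope ring_scope.

Section HoeffdingLemma.
Variable R : realType.

Lemma ge0_derive_le (f df : R -> R) (a b : R) :
  (forall y : R, is_derive y 1 f (df y)) -> (forall y, a <= y <= b -> 0 <= df y) ->
  a <= b -> f a <= f b.
Proof.
move=> fd df_ge0 ab.
have cf : {within `[a, b], continuous f}%classic.
  apply/continuous_subspaceT => y.
  by apply/differentiable_continuous/derivable1_diffP; case: (fd y).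
have [c /andP[ac cb] fab] := MVT_segment ab (fun y _ => fd y) cf.
rewrite bnd_simp in ac cb.
by rewrite -subr_ge0 fab mulr_ge0 ?subr_ge0 ?df_ge0 ?ac.
Qed.

Variable p : R.
Hypothesis p01 : 0 <= p <= 1.

Lemma bernoulli_mgf_gt0 (y : R) : 0 < 1 - p + p * expR y.
Proof.
have := expR_gt0 y; case/andP: p01 => p0 p1 ey; nra.
Qed.

(* The left-hand side is the derivative of [ln (1 - p + p e^l) - l p]. *)
Lemma bernoulli_tilt_le (l : R) : 0 <= l ->
  p * expR l / (1 - p + p * expR l) - p <= l / 4.
Proof.
move=> l0; rewrite -subr_ge0.
pose f y := y / 4 - (p * expR y / (1 - p + p * expR y) - p).
have -> : 0 = f 0 by rewrite /f expR0 mulr1 subrK divr1 subrr mul0r subrr.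
apply: (@ge0_derive_le f
  (fun y => 1 / 4 - p * expR y * (1 - p) / (1 - p + p * expR y) ^+ 2)) => // y.
  have D_neq0 := lt0r_neq0 (bernoulli_mgf_gt0 y).
  by apply: trigger_derive; rewrite /GRing.scale /=; field.
move=> _; have D_gt0 := bernoulli_mgf_gt0 y; have := expR_gt0 y.
rewrite subr_ge0 ler_pdivrMr ?exprn_gt0 //.
case/andP: p01; set e := expR y in D_gt0 * => p0 p1 e0.
(* AM-GM: [4 (1 - p) (p e) <= (1 - p + p e)^2]. *)
have : 0 <= (1 - p - p * e) ^+ 2 by apply: sqr_ge0.
nra.
Qed.

Lemma hoeffding_bernoulli (l : R) : 0 <= l ->
  1 - p + p * expR l <= expR (l * p + l ^+ 2 / 8).
Proof.
move=> l0.
pose E y := expR (- (y * p) - y ^+ 2 / 8).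
pose G y := - ((1 - p + p * expR y) * E y).
have : G 0 <= G l.
  apply: (@ge0_derive_le G (fun y => E y * (1 - p + p * expR y) *
    (y / 4 - (p * expR y / (1 - p + p * expR y) - p)))) => // y.
    have D_neq0 := lt0r_neq0 (bernoulli_mgf_gt0 y).
    by apply: trigger_derive; rewrite /GRing.scale /E /=; field.
  case/andP => y0 _; rewrite !mulr_ge0 ?expR_ge0 ?subr_ge0 ?bernoulli_tilt_le //.
  exact: ltW (bernoulli_mgf_gt0 y).
rewrite /G /E lerN2 expR0 mulr1 subrK mul1r mul0r oppr0 expr0n /= mul0r subr0.
by rewrite expR0 -opprD expRN ler_pdivrMr ?expR_gt0 // mul1r.
Qed.

End HoeffdingLemma.

Section FiniteTailBounds.
Variables (R : realType) (T : finType) (P : T -> R).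
Hypothesis P_ge0 : forall t, 0 <= P t.

Lemma chernoff_bound (X : T -> nat) (c l : R) : 0 <= l ->
  \sum_(t | c < (X t)%:R) P t <= expR (- (l * c)) * \sum_t expR l ^+ X t * P t.
Proof.
move=> l0; rewrite mulr_sumr big_mkcond /=; apply: ler_sum => t _.
rewrite mulrA -expRM_natl -expRD.
case: ifP => [cX|_]; last by rewrite mulr_ge0 ?expR_ge0.
rewrite -[leLHS]mul1r ler_wpM2r //.
apply: le_trans (expR_ge1Dx _); rewrite lerDl.
by rewrite addrC mulrC -mulrBr mulr_ge0 // subr_ge0 ltW.
Qed.

Lemma binomial_tail (X : T -> nat) (N : nat) (p d : R) :
  (0 < N)%N -> 0 <= p <= 1 -> 0 <= d ->
  (forall e, \sum_t e ^+ X t * P t = (1 - p + p * e) ^+ N) ->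
  \sum_(t | p * N%:R + d < (X t)%:R) P t <= expR (- (2 * d ^+ 2 / N%:R)).
Proof.
move=> N_gt0 p01 d0 mgfX.
have N0 : 0 < N%:R :> R by rewrite ltr0n.
set l := 4 * d / N%:R.
have l0 : 0 <= l by rewrite divr_ge0 ?mulr_ge0 // ltW.
apply: le_trans (chernoff_bound X _ l0) _.
rewrite mgfX.
apply: le_trans (_ : expR (- (l * (p * N%:R + d))) *
                     expR (l * p + l ^+ 2 / 8) ^+ N <= _).
  rewrite ler_wpM2l ?expR_ge0 // lerXn2r ?nnegrE ?expR_ge0 ?hoeffding_bernoulli //.
  exact/ltW/bernoulli_mgf_gt0.
rewrite -expRM_natl -expRD.
(* [l = 4 d / N] minimises the exponent [- l d + N l^2 / 8]. *)
suff -> : - (l * (p * N%:R + d)) + N%:R * (l * p + l ^+ 2 / 8) =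
          - (2 * d ^+ 2 / N%:R) by [].
by rewrite /l; field; rewrite lt0r_neq0.
Qed.

Lemma union_bound (I : finType) (A : pred T) (B : I -> pred T) :
  (forall t, A t -> exists i, B i t) ->
  \sum_(t | A t) P t <= \sum_i \sum_(t | B i t) P t.
Proof.
move=> AB; rewrite (exchange_big_dep predT) //= big_mkcond /=.
apply: ler_sum => t _; case: ifPn => [/AB [i Bit]|_]; last exact: sumr_ge0.
by rewrite (bigD1 i) //= lerDl sumr_ge0.
Qed.

Lemma union_bound_const (I : finType) (A : pred T) (B : I -> pred T) (c : R) :
  (forall t, A t -> exists i, B i t) -> (forall i, \sum_(t | B i t) P t <= c) ->
  \sum_(t | A t) P t <= #|I|%:R * c.
Proof.
move=> AB Bc; apply: le_trans (union_bound AB) _.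
by apply: le_trans (ler_sum _ (fun i _ => Bc i)) _; rewrite sumr_const mulr_natl.
Qed.

End FiniteTailBounds.

Lemma card_setI3_ge (T : finType) (A B1 B2 B3 : {set T}) :
  (#|A| <= #|A :&: B1 :&: B2 :&: B3| + #|A :\: B1| + #|A :\: B2| + #|A :\: B3|)%N.
Proof.
have split_off (C B : {set T}) : C \subset A -> (#|C| <= #|C :&: B| + #|A :\: B|)%N.
  by move=> CA; rewrite -{1}(cardsID B C) leq_add2l subset_leq_card // setSD.
have AB1 := split_off A B1 (subxx A).
have AB2 := split_off (A :&: B1) B2 (subsetIl _ _).
have AB3 := split_off (A :&: B1 :&: B2) B3 (subset_trans (subsetIl _ _) (subsetIl _ _)).
lia.
Qed.

Lemma sum_ffun2_prod (R : comNzRingType) (I J T : finType) (F : I -> J -> T -> R) :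
  \sum_(w : {ffun I -> {ffun J -> T}}) \prod_i \prod_j F i j (w i j) =
  \prod_i \prod_j \sum_t F i j t.
Proof.
rewrite -(bigA_distr_bigA (fun i (g : {ffun J -> T}) => \prod_j F i j (g j))).
by apply: eq_bigr => i _; rewrite bigA_distr_bigA.
Qed.

Section Profiles.
Variables (R : realType) (n m k : nat).
Variables (grp : 'I_n -> 'I_k) (mu : 'I_k -> {ffun 'I_m -> bool}) (p : R).

Definition block (i : 'I_k) : {set 'I_n} := [set v | grp v == i].

Definition deviations (w : profile n m) (i : 'I_k) (s : 'I_m) : nat :=
  #|block i :\: side w s (mu i s)|.

Lemma is_tangle_few_deviations (w : profile n m) (a : nat) (i : 'I_k) :
  (forall s, a + 3 * deviations w i s <= #|block i|)%N -> is_tangle w a (mu i).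
Proof.
move=> few; apply/forallP => s1; apply/forallP => s2; apply/forallP => s3.
have := few s1; have := few s2; have := few s3; rewrite /deviations.
set B1 := side w s1 _; set B2 := side w s2 _; set B3 := side w s3 _.
have := card_setI3_ge (block i) B1 B2 B3.
have : (#|block i :&: B1 :&: B2 :&: B3| <= #|B1 :&: B2 :&: B3|)%N.
  apply/subset_leq_card/subsetP => v.
  by rewrite !inE => /andP[/andP[/andP[_ ->] ->] ->].
lia.
Qed.

Lemma not_tangle_deviations (w : profile n m) (a : nat) (i : 'I_k) :
  ~~ is_tangle w a (mu i) -> exists s, (#|block i| < a + 3 * deviations w i s)%N.
Proof.
move=> not_tangle; apply/existsP; apply: contraR not_tangle => /existsPn few.
by apply: is_tangle_few_deviations => s; rewrite leqNgt; apply: few.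
Qed.

Lemma prof_prob_ge0 : 0 <= p <= 1 -> forall w : profile n m, 0 <= prof_prob grp mu p w.
Proof.
case/andP=> p0 p1 w; apply: prodr_ge0 => v _; apply: prodr_ge0 => s _.
by case: ifP; rewrite ?subr_ge0.
Qed.

Lemma deviations_mgf (i : 'I_k) (s : 'I_m) (e : R) :
  \sum_(w : profile n m) e ^+ deviations w i s * prof_prob grp mu p w =
  (1 - p + p * e) ^+ #|block i|.
Proof.
(* [F v s' b] weighs the answer [b] of [v] to [s'], with an extra factor [e]
   when that answer is one of the deviations counted. *)
pose F v s' b := (if b == mu (grp v) s' then 1 - p else p) *
  (if [&& grp v == i, s' == s & b != mu i s] then e else 1).
transitivity (\sum_(w : profile n m) \prod_v \prod_s' F v s' (w v s')).
  apply: eq_bigr => w _; under [RHS]eq_bigr do rewrite big_split /=.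
  rewrite big_split /= mulrC; congr (_ * _).
  rewrite /deviations -prodr_const big_mkcond /=; apply: eq_bigr => v _.
  rewrite (bigD1 s) //= eqxx big1 ?mulr1 => [|s' /negbTE->]; last by rewrite andbF.
  by rewrite !inE andbC.
rewrite sum_ffun2_prod -prodr_const [RHS]big_mkcond /=; apply: eq_bigr => v _.
rewrite (bigD1 s) //= [X in _ * X]big1 ?mulr1 => [|s' /negbTE s's]; last first.
  by rewrite big_bool /F s's andbF /=; case: (mu (grp v) s') => /=; ring.
rewrite inE big_bool /F eqxx /=.
by have [->|_] := eqVneq (grp v) i; case: (mu _ s) => /=; ring.
Qed.

Lemma deviations_tail (i : 'I_k) (s : 'I_m) (d : R) :
  (0 < #|block i|)%N -> 0 <= p <= 1 -> 0 <= d ->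
  \sum_(w : profile n m | p * #|block i|%:R + d < (deviations w i s)%:R)
     prof_prob grp mu p w <= expR (- (2 * d ^+ 2 / #|block i|%:R)).
Proof.
move=> block_gt0 p01 d_ge0.
apply: (binomial_tail (X := fun w => deviations w i s) (prof_prob_ge0 p01)) => // e.
exact: deviations_mgf.
Qed.

End Profiles.

Theorem lemma1 (R : realType) (n m k : nat) (p : R) (a : nat)
  (mu : 'I_k -> {ffun 'I_m -> bool}) (grp : 'I_n -> 'I_k) :
  (0 < n)%N -> (0 < m)%N -> (0 < k)%N -> (k %| n)%N ->
  0 < p -> p < 1 / 2 ->
  (forall i : 'I_k, #|[set v : 'I_n | grp v == i]| = (n %/ k)%N) ->
  p < (n%:R - k%:R * a%:R) / (3 * n%:R) ->
  prob_some_fails grp mu p a <=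
    k%:R * m%:R *
    expR (- ((2 * n%:R) / (9 * k%:R)
             * (1 - k%:R * (a%:R / n%:R) - 3 * p) ^+ 2)).
Proof.
move=> n_gt0 _ k_gt0 k_dvd_n p_gt0 p_lt_half block_card p_lt.
set N := (n %/ k)%N.
have N_gt0 : (0 < N)%N by rewrite divn_gt0 // dvdn_leq.
have n_neq0 : n%:R != 0 :> R by rewrite pnatr_eq0 -lt0n.
have k_neq0 : k%:R != 0 :> R by rewrite pnatr_eq0 -lt0n.
have NE : N%:R = n%:R / k%:R :> R by rewrite natr_div // unitfE.
have p01 : 0 <= p <= 1 by apply/andP; split; lra.
set d : R := N%:R / 3 * (1 - k%:R * (a%:R / n%:R) - 3 * p).
have d_ge0 : 0 <= d.
  have p_ltE : (n%:R - k%:R * a%:R) / (3 * n%:R) = (1 - k%:R * (a%:R / n%:R)) / 3 :> R.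
    by field.
  rewrite p_ltE in p_lt.
  by rewrite mulr_ge0 ?divr_ge0 ?ler0n //; lra.
have threshold : p * N%:R + d = (N%:R - a%:R) / 3.
  by rewrite /d NE; field; apply/andP.
have exponent : 2 * d ^+ 2 / N%:R =
    (2 * n%:R) / (9 * k%:R) * (1 - k%:R * (a%:R / n%:R) - 3 * p) ^+ 2.
  by rewrite /d NE; field; apply/andP.
have -> : k%:R * m%:R = #|{: 'I_k * 'I_m}|%:R :> R.
  by rewrite card_prod !card_ord natrM.
rewrite /prob_some_fails -exponent.
apply: (union_bound_const (prof_prob_ge0 grp mu p01) (B := fun j w =>
  p * N%:R + d < (deviations grp mu w j.1 j.2)%:R)) => [w|[i s]].
  case/existsP=> i /(not_tangle_deviations grp)[s]; rewrite block_card => many.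
  exists (i, s); rewrite /= threshold.
  by move: many; rewrite -(ltr_nat R) natrD natrM; lra.
move: (deviations_tail (grp := grp) (p := p) (i := i) (d := d) mu s).
by rewrite block_card => /(_ N_gt0 p01 d_ge0).
Qed.
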